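(* Let $G$ be a connected threshold graph of order $n\ge 4$ and size $m$ with $n-1<m<\binom{n}{2}$, let $c$ be its number of type 1 vertices, $(b_1,\ldots,b_z)$ its backwards zero position sequence, $F_1=\sum_{i=1}^z b_i^2$, and $\rho$ the spectral radius of its adjacency matrix. Then the greatest real root $\xi$ of the polynomial \[x^3-(c+1)x^2+\Big(c-\sum_{i=1}^z b_i\Big)x+\Big(c\sum_{i=1}^z b_i-F_1\Big)\] satisfies $\xi\ge 1+\rho$.
   Context: A threshold graph is a simple graph whose vertices can be ordered $v_1,\ldots,v_n$ so that for each $2\le i\le n$, $v_i$ is either adjacent to all of $v_1,\ldots,v_{i-1}$ (then $a_i=1$) or to none of them (then $a_i=0$); by convention $a_1=1$. Vertex $v_i$ is of type 1 if $a_i=1$ and of type 0 if $a_i=0$; $c$ and $z$ are the numbers of type 1 and type 0 vertices. The backwards zero position sequence $(b_1,\ldots,b_z)$ is defined by letting $b_i$ be the number of type 1 vertices appearing after the $i$-th type 0 vertex in the order $v_1,\ldots,v_n$. *)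

From mathcomp Require Import all_boot all_order all_algebra.
From mathcomp Require Import reals.
Set Implicit Arguments. Unset Strict Implicit. Unset Printing Implicit Defensive.
Import Order.TTheory GRing.Theory Num.Theory.

(* Threshold graph on vertices v_1..v_n, represented as 'I_n (v_{i+1} = i),
   given by its binary creation sequence a : 'I_n -> bool (a i = 1 iff type 1).
   Vertices i < j are adjacent iff a j (v_j joins to all earlier vertices). *)
Definition thr_adj (n : nat) (a : 'I_n -> bool) : rel 'I_n :=
  fun i j => ((i < j)%N && a j) || ((j < i)%N && a i).

Definition thr_size (n : nat) (a : 'I_n -> bool) : nat :=
  #|[set p : 'I_n * 'I_n | ((p.1 < p.2)%N && thr_adj a p.1 p.2)]|.

Definition thr_connected (n : nat) (a : 'I_n -> bool) : Prop :=
  forall i j : 'I_n, connect (thr_adj a) i j.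

Definition thr_c (n : nat) (a : 'I_n -> bool) : nat := #|[set i | a i]|.

Definition thr_b (n : nat) (a : 'I_n -> bool) (j : 'I_n) : nat :=
  #|[set k : 'I_n | (j < k)%N && a k]|.

Definition thr_sumb (n : nat) (a : 'I_n -> bool) : nat :=
  \sum_(j < n | ~~ a j) thr_b a j.

Definition thr_F1 (n : nat) (a : 'I_n -> bool) : nat :=
  \sum_(j < n | ~~ a j) (thr_b a j) ^ 2.

Local Open Scope ring_scope.

Definition thr_adjmx (R : realType) (n : nat) (a : 'I_n -> bool) : 'M[R]_n :=
  \matrix_(i, j) (thr_adj a i j)%:R.

(* spectral radius: r = max |lambda| over the eigenvalues lambda
   (the adjacency matrix is real symmetric, so all eigenvalues are real) *)
Definition is_spectral_radius (R : realType) (n : nat) (A : 'M[R]_n) (r : R) : Prop :=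
  (exists2 l, eigenvalue A l & `|l| = r) /\ (forall l, eigenvalue A l -> `|l| <= r).

Definition is_greatest_root (R : realType) (p : {poly R}) (x : R) : Prop :=
  root p x /\ (forall y, root p y -> y <= x).

(* Let w >= 0 be a nonzero vector with rho w <= A w, e.g. w = |v| for an
   eigenvector v whose eigenvalue has modulus rho.  The type-1 vertices form a
   clique of size c; let X be their w-weight and W = sum_i b_i w_i over the
   type-0 vertices i, each adjacent exactly to the b_i type-1 vertices after it.
   The inequality at the type-1 vertices gives (rho + 1 - c) X <= W, and at
   the type-0 vertices rho (rho + 1) W <= F_1 X + (sum_i b_i) W.  Together
   they give (rho^2 + rho - sum_i b_i)(rho + 1 - c) <= F_1, i.e. p(1 + rho) <= 0
   for the monic cubic p, which therefore has a root >= 1 + rho.  The sign of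
   rho + 1 - c comes from the Rayleigh quotient of the indicator of the
   clique, which shows rho >= c - 1. *)

From mathcomp Require Import all_boot all_order all_algebra.
From mathcomp Require Import reals.
From mathcomp Require Import complex polyrcf.
From mathcomp Require Import ring lra.

Set Implicit Arguments.
Unset Strict Implicit.
Unset Printing Implicit Defensive.

Import Order.TTheory GRing.Theory Num.Theory.
Local Open Scope ring_scope.

Lemma natr_card_set (R : semiRingType) (T : finType) (P : pred T) :
  #|[set x | P x]|%:R = \sum_(x | P x) 1 :> R.
Proof. by rewrite -sum1_card natr_sum; apply: eq_bigl => x; rewrite inE. Qed.

Lemma sum_mul_natr_bool (R : semiRingType) (T : finType) (P : pred T) (F : T -> R) :
  \sum_i F i * (P i)%:R = \sum_(i | P i) F i.
Proof. by rewrite [RHS]big_mkcond; apply: eq_bigr => i _; rewrite mulr_natr mulrb. Qed.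

Lemma eigenvalue_map_mx (F K : fieldType) (f : {rmorphism F -> K}) n
    (A : 'M[F]_n) (x : F) :
  eigenvalue (map_mx f A) (f x) = eigenvalue A x.
Proof. by rewrite !eigenvalue_root_char -map_char_poly fmorph_root. Qed.

Section Spectral.
Local Open Scope sesquilinear_scope.

Section NormalSpectral.
Variables (C : numClosedFieldType) (n : nat) (A : 'M[C]_n).
Hypothesis normalA : A \is normalmx.
Let P := spectralmx A.
Let d := spectral_diag A.

Lemma spectral_diag_eigenvalue k : eigenvalue A (d 0 k).
Proof.
have Punit : P \in unitmx := spectral_unit A.
apply/eigenvalueP; exists (row k P).
  rewrite rowE {1}(orthomx_spectralP normalA) !mulmxA mulmxK //.
  by rewrite -(rowE k (diag_mx d)) row_diag_mx scalemxAl.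
apply/eqP => /(congr1 (mulmx^~ (invmx P))) /matrixP /(_ 0 k).
by rewrite /= rowE mulmxK // mul0mx !mxE !eqxx; apply/eqP; exact: oner_neq0.
Qed.

Lemma spectral_quadratic_form (u : 'rV[C]_n) (w := u *m P^t*) :
  (u *m A *m u^t*) 0 0 = \sum_j d 0 j * (w 0 j * (w 0 j)^*).
Proof.
have wE : w ^t* = P *m u ^t* by rewrite /w trmx_mul map_mxM trmxCK.
rewrite {1}(orthomx_spectralP normalA) invmx_unitary ?spectral_unitarymx //.
rewrite -/P -/d !mulmxA -/w -(mulmxA _ P) -wE mul_mx_diag mxE.
by apply: eq_bigr => j _; rewrite !mxE mulrAC mulrC.
Qed.

Lemma spectral_norm_form (u : 'rV[C]_n) (w := u *m P^t*) :
  (u *m u^t*) 0 0 = \sum_j w 0 j * (w 0 j)^*.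
Proof.
have wE : w ^t* = P *m u ^t* by rewrite /w trmx_mul map_mxM trmxCK.
have PP : P^t* *m P = 1%:M by apply: mulmx1C; apply/unitarymxP/spectral_unitarymx.
rewrite -{1}[u]mulmx1 -PP mulmxA -/w -(mulmxA w) -wE mxE.
by apply: eq_bigr => j _; rewrite !mxE.
Qed.
End NormalSpectral.

Lemma symmetric_rayleigh_le (R : rcfType) n (A : 'M[R]_n) (u : 'rV[R]_n) :
  A^T = A -> u != 0 ->
  exists2 l, eigenvalue A l & (u *m A *m u^T) 0 0 <= l * (u *m u^T) 0 0.
Proof.
case: n A u => [|n] A u Asym u0; first by rewrite thinmx0 eqxx in u0.
(* Complexify, diagonalize by a unitary matrix, and bound every eigenvalue
   appearing in the quadratic form by the largest one. *)
pose f := real_complex R.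
have real_f x : f x \is Num.real by apply/complex_realP; exists x.
pose AC := A ^ f.
have ACh : AC \is hermsymmx.
  apply: realsym_hermsym; last by apply/mxOverP => i j; rewrite mxE real_f.
  by apply/is_hermitianmxP; rewrite expr0 scale1r map_mx_id // /AC map_trmx Asym.
pose d := spectral_diag AC.
have dR j : d 0 j = f (complex.Re (d 0 j)).
  by rewrite /f complexRe; apply/esym/Creal_ReP/(mxOverP (hermitian_spectral_diag_real ACh)).
have [k _ kmax] := @arg_maxP _ _ _ ord0 predT (fun j => complex.Re (d 0 j)) isT.
exists (complex.Re (d 0 k)).
  have := spectral_diag_eigenvalue (hermitian_normalmx ACh) k.
  by rewrite -/d dR (eigenvalue_map_mx f).
pose uC := u ^ f.
have mapf (B : 'M_n.+1) : f ((u *m B *m u^T) 0 0) = (uC *m map_mx f B *m uC^t*) 0 0.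
  have -> : uC^t* = uC^T by apply/matrixP => i j; rewrite !mxE conj_Creal.
  by rewrite map_trmx -!map_mxM [RHS]mxE.
have f_mul : {morph f : x y / x * y} by move=> x y; exact: rmorphM.
rewrite -lecR -/f f_mul -{3}[u]mulmx1 !mapf map_mx1 mulmx1.
rewrite spectral_quadratic_form ?hermitian_normalmx // (spectral_norm_form AC).
rewrite mulr_sumr; apply: ler_sum => j _.
by apply: ler_wpM2r; [exact: mul_conjC_ge0 | rewrite -/d [d 0 j]dR lecR; exact: kmax].
Qed.

End Spectral.

Lemma eigenvector_norm_le (R : numDomainType) n (A : 'M[R]_n) (v : 'rV_n) l j :
  v *m A = l *: v -> `|l| * `|v 0 j| <= \sum_i `|v 0 i| * `|A i j|.
Proof.
move=> vA; rewrite -normrM.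
have -> : l * v 0 j = (v *m A) 0 j by rewrite vA mxE.
rewrite mxE; apply: le_trans (ler_norm_sum _ _ _) _.
by apply: ler_sum => i _; rewrite normrM.
Qed.

Lemma greatest_root_ge (R : realType) (p : {poly R}) x xi :
  0 < lead_coef p -> p.[x] <= 0 -> is_greatest_root p xi -> x <= xi.
Proof.
move=> lc_gt0 px_le0 [_ xi_ge]; have [N leN] := poly_pinfty_gt_lc lc_gt0.
have pz_ge0 : 0 <= p.[Num.max x N].
  by apply: le_trans (ltW lc_gt0) (leN _ _); rewrite le_max lexx orbT.
have x_le : x <= Num.max x N by rewrite le_max lexx.
have p_sign : p.[x] <= 0 <= p.[Num.max x N] by rewrite px_le0 pz_ge0.
have [y /andP[x_le_y _] ry] := poly_ivt x_le p_sign.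
exact: le_trans x_le_y (xi_ge y ry).
Qed.

Lemma lead_coef_thr_cubic (R : nzRingType) (s t u : R) :
  lead_coef ('X^3 - s *: 'X^2 + t *: 'X + u%:P) = 1.
Proof.
have size_low : (size (- (s *: 'X^2) + (t *: 'X + u%:P))%R < 4)%N.
  rewrite (leq_ltn_trans (size_add _ _)) // gtn_max size_polyN.
  rewrite (leq_ltn_trans (size_scale_leq _ _)) ?size_polyXn //.
  rewrite (leq_ltn_trans (size_add _ _)) // gtn_max.
  rewrite (leq_ltn_trans (size_scale_leq _ _)) ?size_polyX //.
  by rewrite (leq_ltn_trans (size_polyC_leq1 _)).
by rewrite -!addrA lead_coefDl ?lead_coefXn // size_polyXn.
Qed.

Lemma horner_thr_cubic (R : comRingType) (c S F r : R) :
  ('X^3 - (c + 1) *: 'X^2 + (c - S) *: 'X + (c * S - F)%:P).[1 + r]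
  = (r ^+ 2 + r - S) * (r + 1 - c) - F.
Proof. by rewrite !(hornerD, hornerN, hornerZ, hornerXn, hornerX, hornerC); ring. Qed.

Section ThresholdAdjacency.
Variables (n : nat) (a : 'I_n -> bool).

Lemma thr_adj_type1 i j : a j -> thr_adj a i j = (i != j) && (a i || (i < j)%N).
Proof.
move=> aj; rewrite /thr_adj aj andbT -val_eqE /=.
by case: ltngtP => //= _; rewrite ?orbT ?orbF.
Qed.

Lemma thr_adj_type0 i k : ~~ a i -> thr_adj a k i = (i < k)%N && a k.
Proof. by move=> /negbTE ai; rewrite /thr_adj ai andbF. Qed.

End ThresholdAdjacency.

Section Subeigenvector.
Variables (R : realFieldType) (n : nat) (a : 'I_n -> bool) (w : 'I_n -> R) (r : R).
Hypotheses (w_ge0 : forall j, 0 <= w j) (w_neq0 : exists j, w j != 0) (r_ge0 : 0 <= r)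
  (r_sub : forall j, r * w j <= \sum_(i | thr_adj a i j) w i).

Let c : R := (thr_c a)%:R.
Let S : R := (thr_sumb a)%:R.
Let F : R := (thr_F1 a)%:R.
Let b i : R := (thr_b a i)%:R.
Let X := \sum_(j | a j) w j.
Let Y (j : 'I_n) := \sum_(i | ~~ a i && (i < j)%N) w i.
Let W := \sum_(i | ~~ a i) b i * w i.

Lemma neighbour_weight_type1 j : a j -> \sum_(i | thr_adj a i j) w i = X - w j + Y j.
Proof.
move=> aj; rewrite (bigID a) /= [X](bigD1 j) //= [w j + _]addrC addrK.
congr (_ + _); apply: eq_bigl => i; rewrite thr_adj_type1 //.
  by case: (a i); rewrite ?andbT ?andbF.
by case: (a i); rewrite ?andbF //= andbT; case: eqVneq => [->|]; rewrite ?ltnn.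
Qed.

Lemma type1_weight_le j : a j -> (r + 1) * w j <= X + Y j.
Proof. by move=> aj; have := r_sub j; rewrite neighbour_weight_type1 //; lra. Qed.

Lemma type1_neighbour_sum : \sum_(k | a k) Y k = W.
Proof.
rewrite /W /b; under [RHS]eq_bigr => i _ do rewrite natr_card_set mulr_suml mul1r.
rewrite (exchange_big_dep (fun i => ~~ a i)) /=; last by move=> k i _ /andP[].
by apply: eq_bigr => i ai; apply: eq_bigl => k; rewrite ai andbC.
Qed.

Lemma clique_weight_le : (r + 1 - c) * X <= W.
Proof.
rewrite -type1_neighbour_sum /c /thr_c natr_card_set.
rewrite mulrBl mulr_suml lerBlDl -big_split /= {1}/X mulr_sumr.
by apply: ler_sum => j aj; rewrite mul1r type1_weight_le.
Qed.

Lemma type0_weight_le i : ~~ a i -> (r + 1) * r * w i <= b i * X + W.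
Proof.
move=> ai.
have sub : r * w i <= \sum_(k : 'I_n | (i < k)%N && a k) w k.
  by rewrite -(eq_bigl _ _ (fun k => thr_adj_type0 k ai)); exact: r_sub.
have le_W : \sum_(k : 'I_n | (i < k)%N && a k) Y k <= W.
  rewrite -type1_neighbour_sum (bigID (fun k : 'I_n => (i < k)%N) (fun k => a k)) /=.
  rewrite (eq_bigl (fun k => a k && (i < k)%N) _ (fun k => andbC _ _)) lerDl.
  by apply: sumr_ge0 => k _; exact: sumr_ge0.
rewrite /b natr_card_set mulr_suml -mulrA.
apply: le_trans (ler_wpM2l (addr_ge0 r_ge0 ler01) sub) _.
rewrite mulr_sumr; apply: le_trans (lerD (lexx _) le_W); rewrite -big_split /=.
by apply: ler_sum => k /andP[_ ak]; rewrite mul1r type1_weight_le.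
Qed.

Lemma indep_weight_le : r * (r + 1) * W <= F * X + S * W.
Proof.
rewrite /F /S /thr_F1 /thr_sumb !natr_sum !mulr_suml {1}/W mulr_sumr -big_split /=.
apply: ler_sum => i ai; rewrite natrX -/(b i) expr2 -[b i * b i * X]mulrA -mulrDr.
rewrite (_ : _ * (b i * w i) = b i * ((r + 1) * r * w i)); last by ring.
by apply: ler_wpM2l; [exact: ler0n | exact: type0_weight_le].
Qed.

Lemma clique_weight_gt0 : 0 < r -> 0 < X.
Proof.
move=> r_gt0; rewrite lt_def sumr_ge0 // andbT; apply/eqP => X0.
have w_type1 j (aj : a j) : w j = 0 := psumr_eq0P (fun k _ => w_ge0 k) X0 aj.
case: w_neq0 => j /eqP; apply; case aj: (a j); first exact: w_type1.
have := r_sub j; rewrite (eq_bigl _ _ (fun k => thr_adj_type0 k (negbT aj))).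
rewrite big1 => [rw_le0|k /andP[_ /w_type1 //]].
by apply/le_anti; rewrite w_ge0 andbT -(pmulr_rle0 _ r_gt0).
Qed.

Lemma thr_subeigenvector_bound : c - 1 <= r -> (r ^+ 2 + r - S) * (r + 1 - c) <= F.
Proof.
move=> c_le; have F_ge0 : 0 <= F := ler0n _ _.
have [E_le0|E_gt0] := lerP (r ^+ 2 + r - S) 0.
  by apply: le_trans F_ge0; rewrite mulr_le0_ge0 //; lra.
have r_gt0 : 0 < r.
  have S_ge0 : 0 <= S := ler0n _ _.
  rewrite lt_def r_ge0 andbT; apply: contraTneq E_gt0 => ->; lra.
have X_gt0 := clique_weight_gt0 r_gt0.
rewrite -(ler_pM2r X_gt0) -mulrA.
apply: le_trans (ler_wpM2l (ltW E_gt0) clique_weight_le) _.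
have := indep_weight_le; have -> : (r ^+ 2 + r - S) * W = r * (r + 1) * W - S * W by ring.
lra.
Qed.

End Subeigenvector.

Section ThresholdSpectrum.
Variables (R : realType) (n : nat) (a : 'I_n -> bool) (rho : R).
Hypothesis hrho : is_spectral_radius (thr_adjmx R a) rho.

Let A := thr_adjmx R a.
Let c : R := (thr_c a)%:R.
Let u : 'rV[R]_n := \row_i (a i)%:R.

Lemma thr_adjmx_sym : A^T = A.
Proof. by apply/matrixP => i j; rewrite !mxE /thr_adj orbC. Qed.

Lemma clique_norm : (u *m u^T) 0 0 = c.
Proof.
rewrite mxE /c /thr_c natr_card_set; under eq_bigr do rewrite !mxE.
by rewrite sum_mul_natr_bool; apply: eq_bigr => j ->.
Qed.

Lemma clique_row j : a j -> (u *m A) 0 j = c - 1.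
Proof.
move=> aj; rewrite mxE; under eq_bigr do rewrite !mxE mulrC.
rewrite sum_mul_natr_bool /c /thr_c natr_card_set !(bigD1 j aj) /=.
rewrite /thr_adj ltnn /= add0r [1 + _]addrC addrK.
by apply: eq_bigr => i /andP[ai ij]; rewrite -/(thr_adj a i j) thr_adj_type1 // ij ai.
Qed.

Lemma clique_quadratic_form : (u *m A *m u^T) 0 0 = c * (c - 1).
Proof.
rewrite mxE; under eq_bigr do rewrite [u^T _ _]mxE [u _ _]mxE.
rewrite sum_mul_natr_bool (eq_bigr _ (fun j => @clique_row j)).
by rewrite /c /thr_c natr_card_set mulr_suml; under [RHS]eq_bigr do rewrite mul1r.
Qed.

Lemma thr_spectral_radius_ge : (0 < thr_c a)%N -> c - 1 <= rho.
Proof.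
move=> c_gt0; have c_pos : 0 < c by rewrite ltr0n.
have u_neq0 : u != 0.
  case/card_gt0P: c_gt0 => i; rewrite inE => ai.
  by apply/eqP => /rowP/(_ i); rewrite !mxE ai; apply/eqP/oner_neq0.
have [l el] := symmetric_rayleigh_le thr_adjmx_sym u_neq0.
rewrite clique_quadratic_form clique_norm mulrC ler_pM2r // => cl.
exact: le_trans cl (le_trans (real_ler_norm (num_real l)) (hrho.2 l el)).
Qed.

Lemma thr_spectral_subeigenvector : exists w : 'I_n -> R, [/\ forall j, 0 <= w j,
  exists j, w j != 0 & forall j, rho * w j <= \sum_(i | thr_adj a i j) w i].
Proof.
have [l el <-] := hrho.1; have [v vA v_neq0] := eigenvalueP el.
exists (fun j => `|v 0 j|); split => [j | | j]; first exact: normr_ge0.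
  have /existsP[j vj] : [exists j, v 0 j != 0].
    apply: contraNT v_neq0 => /existsPn v0; apply/eqP/rowP => j.
    by move: (v0 j); rewrite negbK mxE => /eqP.
  by exists j; rewrite normr_eq0.
apply: le_trans (eigenvector_norm_le j vA) _.
by under eq_bigr do rewrite mxE normr_nat; rewrite sum_mul_natr_bool.
Qed.

End ThresholdSpectrum.

Theorem theorem5p1 (R : realType) (n : nat) (a : 'I_n -> bool)
  (ha1 : forall i : 'I_n, nat_of_ord i = 0%N -> a i)
  (hn : (4 <= n)%N)
  (hconn : thr_connected a)
  (hm1 : (n.-1 < thr_size a)%N)
  (hm2 : (thr_size a < 'C(n, 2))%N)
  (rho xi : R)
  (hrho : is_spectral_radius (thr_adjmx R a) rho)
  (hxi : is_greatest_root
           ('X^3 - ((thr_c a)%:R + 1) *: 'X^2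
            + ((thr_c a)%:R - (thr_sumb a)%:R) *: 'X
            + ((thr_c a)%:R * (thr_sumb a)%:R - (thr_F1 a)%:R)%:P) xi) :
  1 + rho <= xi.
Proof.
have c_gt0 : (0 < thr_c a)%N.
  have n_gt0 : (0 < n)%N by apply: leq_trans hn.
  by rewrite /thr_c card_gt0; apply/set0Pn; exists (Ordinal n_gt0); rewrite inE ha1.
have rho_ge0 : 0 <= rho by have [l _ <-] := hrho.1; exact: normr_ge0.
have [w [w_ge0 w_neq0 w_sub]] := thr_spectral_subeigenvector hrho.
apply: greatest_root_ge hxi; first by rewrite lead_coef_thr_cubic ltr01.
rewrite horner_thr_cubic subr_le0.
exact: thr_subeigenvector_bound w_ge0 w_neq0 rho_ge0 w_sub (thr_spectral_radius_ge hrho c_gt0).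
Qed.
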